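(* Let $L$ be a nonarchimedean field extension of a perfectoid field $K$ such that the residue field $\widetilde L$ has positive transcendence degree over $\widetilde K$, and assume $\widetilde K$ is uncountable. Then $L$ is not a quotient field of a perfectoid Tate algebra $K\langle x_1^{1/p^\infty},\dots,x_n^{1/p^\infty}\rangle$ in any number $n$ of variables (i.e., there is no continuous surjection from such an algebra onto $L$).
   Context: Tildes denote residue fields of nonarchimedean fields. *)

From HB Require Import structures.
From mathcomp Require Import all_boot all_order all_algebra.
From mathcomp Require Import reals.
Set Implicit Arguments. Unset Strict Implicit. Unset Printing Implicit Defensive.
Import Order.TTheory GRing.Theory Num.Theory.
Local Open Scope ring_scope.

Section Defs.
Variable R : realType.

Definition nonarch_abs (K : fieldType) (v : K -> R) : Prop :=
  [/\ (forall x, 0 <= v x), (forall x, v x = 0 <-> x = 0),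
      (forall x y, v (x * y) = v x * v y) &
      (forall x y, v (x + y) <= Num.max (v x) (v y))].

Definition complete_abs (K : fieldType) (v : K -> R) : Prop :=
  forall u : nat -> K,
    (forall e, 0 < e -> exists N, forall m k, (N <= m)%N -> (N <= k)%N -> v (u m - u k) < e) ->
    exists l, forall e, 0 < e -> exists N, forall m, (N <= m)%N -> v (u m - l) < e.

Definition nonarch_field (K : fieldType) (v : K -> R) : Prop :=
  nonarch_abs v /\ complete_abs v.

(* Perfectoid field of residue characteristic p (Scholze): complete nonarchimedean,
   residue characteristic p (|p| < 1), non-discrete value group, and Frobenius
   x |-> x^p surjective on K°/p (i.e. |x - y^p| <= |p|). *)
Definition perfectoid (p : nat) (K : fieldType) (v : K -> R) : Prop :=
  [/\ prime p, nonarch_field v, v (p%:R) < 1,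
      (forall e, 1 < e -> exists x, 1 < v x /\ v x < e) &
      (forall x, v x <= 1 -> exists y, v y <= 1 /\ v (y ^+ p - x) <= v (p%:R))].

(* The residue field K~ = K°/K°° is countable: some sequence of integral elements
   meets every residue class. *)
Definition residue_countable (K : fieldType) (v : K -> R) : Prop :=
  exists g : nat -> K, (forall k, v (g k) <= 1) /\
    forall x, v x <= 1 -> exists k, v (x - g k) < 1.

(* t in L° has residue class transcendental over K~: for every P in K°[X] with
   nonzero reduction, the reduction of P(t) is nonzero. *)
Definition residue_transcendental (K L : fieldType) (vK : K -> R) (vL : L -> R)
    (iota : {rmorphism K -> L}) (t : L) : Prop :=
  vL t <= 1 /\
  forall P : {poly K}, (forall i, vK P`_i <= 1) -> (exists i, vK P`_i = 1) ->
    vL ((map_poly iota P).[t]) = 1.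

(* trdeg(L~/K~) > 0 : there is a nonempty algebraically independent set,
   i.e. a residue class transcendental over K~. *)
Definition residue_trdeg_pos (K L : fieldType) (vK : K -> R) (vL : L -> R)
    (iota : {rmorphism K -> L}) : Prop :=
  exists t, residue_transcendental vK vL iota t.

Definition exponent (p n : nat) (nu : {ffun 'I_n -> rat}) : Prop :=
  forall i, 0 <= nu i /\ exists k : nat, exists z : int, nu i * (p ^ k)%:R = z%:~R.

Definition tate_elt (p n : nat) (K : fieldType) (v : K -> R)
    (a : {ffun 'I_n -> rat} -> K) : Prop :=
  (forall nu, ~ exponent p nu -> a nu = 0) /\
  (forall e, 0 < e -> exists S : seq {ffun 'I_n -> rat},
      forall nu, nu \notin S -> v (a nu) < e).

Definition has_sum (X : eqType) (K : fieldType) (v : K -> R)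
    (P : X -> Prop) (f : X -> K) (s : K) : Prop :=
  forall e, 0 < e -> exists S0 : seq X, (forall x, x \in S0 -> P x) /\
    forall S : seq X, uniq S -> (forall x, x \in S -> P x) -> {subset S0 <= S} ->
      v (s - \sum_(x <- S) f x) < e.

Definition tate_prod (n : nat) (K : fieldType) (v : K -> R)
    (a b c : {ffun 'I_n -> rat} -> K) : Prop :=
  forall nu : {ffun 'I_n -> rat}, has_sum v (fun ab : {ffun 'I_n -> rat} * {ffun 'I_n -> rat} =>
                          forall i, ab.1 i + ab.2 i = nu i)
                       (fun ab => a ab.1 * b ab.2) (c nu).

Definition tate_one (n : nat) (K : fieldType) (nu : {ffun 'I_n -> rat}) : K :=
  if [forall i, nu i == 0] then 1 else 0.

Definition tate_cont_surj (p n : nat) (K L : fieldType) (vK : K -> R) (vL : L -> R)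
    (iota : {rmorphism K -> L}) (phi : ({ffun 'I_n -> rat} -> K) -> L) : Prop :=
  [/\ [/\ (forall a b, tate_elt p vK a -> tate_elt p vK b ->
         phi (fun nu => a nu + b nu) = phi a + phi b),
      (forall (c : K) a, tate_elt p vK a -> phi (fun nu => c * a nu) = iota c * phi a) &
      (forall a b c, tate_elt p vK a -> tate_elt p vK b -> tate_elt p vK c ->
         tate_prod vK a b c -> phi c = phi a * phi b)],
      phi (@tate_one n K) = 1 &
      (forall a, tate_elt p vK a -> forall e, 0 < e -> exists2 d, 0 < d &
         forall b, tate_elt p vK b -> (forall nu, vK (b nu - a nu) < d) ->
           vL (phi b - phi a) < e)] /\
      (forall l : L, exists a, tate_elt p vK a /\ phi a = l).

End Defs.

From HB Require Import structures.
From mathcomp Require Import all_boot all_order all_algebra.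
From mathcomp Require Import reals.
From mathcomp Require Import ring lra.
From Stdlib Require Import Classical ClassicalEpsilon FunctionalExtensionality.
Import Order.TTheory GRing.Theory Num.Theory.
Local Open Scope ring_scope.
Set Implicit Arguments. Unset Strict Implicit. Unset Printing Implicit Defensive.

(* Let t in L° have residue transcendental over K~ and let w_0, w_1, ... be the
   images of the countably many monomials.  For integral c in K, 1/(t - c) has a
   preimage, and continuity lets us replace it by a finite truncation: 1/(t - c)
   lies within distance < 1 of the K-span of some w_0, ..., w_(m-1).  At most m
   residue classes c can share the same m: a linear relation among m + 1 coefficient
   vectors would give a partial fraction sum sum_i mu_i / (t - c_i), with some mu_i
   a unit, of absolute value < 1, i.e. a nonzero polynomial relation for the residue
   of t.  Hence K~ is a countable union of finite sets. *)

Section NonarchAbs.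
Variables (R : realType) (F : fieldType) (v : F -> R).
Hypothesis hv : nonarch_abs v.

Lemma absv_ge0 x : 0 <= v x. Proof. by case: hv. Qed.

Lemma absvM x y : v (x * y) = v x * v y. Proof. by case: hv. Qed.

Lemma absv_max x y : v (x + y) <= Num.max (v x) (v y). Proof. by case: hv. Qed.

Lemma absv_eq0 x : (v x == 0) = (x == 0).
Proof. by case: hv => _ h _ _; apply/eqP/eqP => /h. Qed.

Lemma absv0 : v 0 = 0. Proof. by apply/eqP; rewrite absv_eq0. Qed.

Lemma absv_gt0 x : (0 < v x) = (x != 0).
Proof. by rewrite lt_def absv_ge0 absv_eq0 andbT. Qed.

Lemma absv1 : v 1 = 1.
Proof.
have v1_gt0 : 0 < v 1 by rewrite absv_gt0 oner_eq0.
by apply: (mulfI (lt0r_neq0 v1_gt0)); rewrite -absvM !mulr1.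
Qed.

Lemma absvN x : v (- x) = v x.
Proof.
have vN1 : v (-1) = 1.
  have := absv_ge0 (-1); have : v (-1) * v (-1) = 1 by rewrite -absvM mulrNN mulr1 absv1.
  nra.
by rewrite -mulN1r absvM vN1 mul1r.
Qed.

Lemma absv_distC x y : v (x - y) = v (y - x). Proof. by rewrite -absvN opprB. Qed.

Lemma absvV x : v x^-1 = (v x)^-1.
Proof.
have [->|x0] := eqVneq x 0; first by rewrite invr0 absv0 invr0.
have vx0 : v x != 0 by rewrite absv_eq0.
by apply: (mulfI vx0); rewrite -absvM !mulfV ?absv1.
Qed.

Lemma absvD_lt x y (e : R) : v x < e -> v y < e -> v (x + y) < e.
Proof. by move=> hx hy; apply: le_lt_trans (absv_max x y) _; rewrite gt_max hx hy. Qed.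

Lemma absvD_le x y (e : R) : v x <= e -> v y <= e -> v (x + y) <= e.
Proof. by move=> hx hy; apply: le_trans (absv_max x y) _; rewrite ge_max hx hy. Qed.

Lemma absvB_le x y (e : R) : v x <= e -> v y <= e -> v (x - y) <= e.
Proof. by move=> hx hy; apply: absvD_le; rewrite ?absvN. Qed.

Lemma absv_sum_lt (I : Type) (r : seq I) (P : pred I) (f : I -> F) (e : R) :
  0 < e -> (forall i, P i -> v (f i) < e) -> v (\sum_(i <- r | P i) f i) < e.
Proof.
move=> e0 hf; apply: (big_ind (fun x => v x < e)) => //; first by rewrite absv0.
by move=> x y; apply: absvD_lt.
Qed.

Lemma absv_sum_le (I : Type) (r : seq I) (P : pred I) (f : I -> F) (e : R) :
  0 <= e -> (forall i, P i -> v (f i) <= e) -> v (\sum_(i <- r | P i) f i) <= e.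
Proof.
move=> e0 hf; apply: (big_ind (fun x => v x <= e)) => //; first by rewrite absv0.
by move=> x y; apply: absvD_le.
Qed.

Lemma absv_prod1 (I : Type) (r : seq I) (P : pred I) (f : I -> F) :
  (forall i, P i -> v (f i) = 1) -> v (\prod_(i <- r | P i) f i) = 1.
Proof.
apply: (big_ind (fun x => v x = 1)); first exact: absv1.
by move=> x y hx hy; rewrite absvM hx hy mulr1.
Qed.

Lemma absvM_le1 x y : v x <= 1 -> v y <= 1 -> v (x * y) <= 1.
Proof. by move=> hx hy; rewrite absvM; have := absv_ge0 x; have := absv_ge0 y; nra. Qed.

Lemma absvM_lt1 x y : v x <= 1 -> v y < 1 -> v (x * y) < 1.
Proof. by move=> hx hy; rewrite absvM; have := absv_ge0 x; have := absv_ge0 y; nra. Qed.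

Lemma absvX_le1 x k : v x <= 1 -> v (x ^+ k) <= 1.
Proof.
by move=> hx; elim: k => [|k IHk]; rewrite ?expr0 ?absv1 // exprS absvM_le1.
Qed.

Lemma absvB_eq1 x y : v x <= 1 -> v y <= 1 -> ~~ (v (x - y) < 1) -> v (x - y) = 1.
Proof. by move=> hx hy; rewrite -leNgt => h; apply/eqP; rewrite eq_le h absvB_le. Qed.

Definition int_poly (P : {poly F}) := forall i, v P`_i <= 1.

Lemma int_polyD P Q : int_poly P -> int_poly Q -> int_poly (P + Q).
Proof. by move=> hP hQ i; rewrite coefD absvD_le. Qed.

Lemma int_polyM P Q : int_poly P -> int_poly Q -> int_poly (P * Q).
Proof. by move=> hP hQ i; rewrite coefM absv_sum_le // => j _; apply: absvM_le1. Qed.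

Lemma int_polyZ c P : v c <= 1 -> int_poly P -> int_poly (c *: P).
Proof. by move=> hc hP i; rewrite coefZ absvM_le1. Qed.

Lemma int_poly_XsubC c : v c <= 1 -> int_poly ('X - c%:P).
Proof.
move=> hc i; rewrite coefB coefX coefC.
by apply: absvB_le; case: eqP; rewrite ?absv1 ?absv0.
Qed.

Lemma int_poly_sum (I : Type) (r : seq I) (P : pred I) (f : I -> {poly F}) :
  (forall i, P i -> int_poly (f i)) -> int_poly (\sum_(i <- r | P i) f i).
Proof.
apply: (big_ind int_poly) => [i|]; last exact: int_polyD.
by rewrite coef0 absv0.
Qed.

Lemma int_poly_prod (I : Type) (r : seq I) (P : pred I) (f : I -> {poly F}) :
  (forall i, P i -> int_poly (f i)) -> int_poly (\prod_(i <- r | P i) f i).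
Proof.
apply: (big_ind int_poly) => [i|]; last exact: int_polyM.
by rewrite coefC; case: eqP; rewrite ?absv1 ?absv0.
Qed.

Lemma int_poly_unit_coef P x : int_poly P -> v x <= 1 -> v P.[x] = 1 ->
  exists i, v P`_i = 1.
Proof.
move=> iP hx Px1; apply: NNPP => no_unit.
have coef_lt1 i : v P`_i < 1.
  by rewrite lt_neqAle iP andbT; apply/eqP => Pi1; apply: no_unit; exists i.
suff : v P.[x] < 1 by rewrite Px1 ltxx.
rewrite horner_coef absv_sum_lt // => i _.
by rewrite mulrC absvM_lt1 ?absvX_le1.
Qed.

Lemma normalized_left_kernel m k (A : 'M[F]_(m, k)) : ~~ row_free A ->
  exists (mu : 'I_m -> F) (i0 : 'I_m),
    [/\ forall j, \sum_i mu i * A i j = 0, forall i, v (mu i) <= 1 & v (mu i0) = 1].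
Proof.
rewrite -kermx_eq0 => /rowV0Pn[u /sub_kermxP uA u_neq0].
have [k0 uk0] : exists k0, u 0 k0 != 0.
  apply/existsP; apply: contraR u_neq0 => /existsPn u0.
  by apply/eqP/rowP => i; rewrite mxE; apply/eqP; rewrite -[_ == _]negbK u0.
have [i0 _ umax] := @arg_maxP _ R _ k0 predT (fun i => v (u 0 i)) isT.
have ui0_gt0 : 0 < v (u 0 i0).
  by apply: lt_le_trans (umax k0 isT); rewrite absv_gt0.
have ui0 : u 0 i0 != 0 by rewrite -absv_gt0.
exists (fun i => u 0 i / u 0 i0), i0; split=> [j|i|].
- under eq_bigr => i _ do rewrite mulrAC.
  rewrite -mulr_suml; have -> : \sum_i u 0 i * A i j = (u *m A) 0 j by rewrite mxE.
  by rewrite uA mxE mul0r.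
- by rewrite absvM absvV ler_pdivrMr // mul1r; apply: umax.
- by rewrite divff // absv1.
Qed.

End NonarchAbs.

Lemma greedy_net (T : eqType) (close : rel T) (A : T -> Prop) m :
  (forall s : seq T, size s = m -> {in s, forall x, A x} ->
     ~~ pairwise (fun x y => ~~ close y x) s) ->
  exists s : seq T, {in s, forall x, A x} /\ forall x, A x -> exists2 y, y \in s & close x y.
Proof.
move=> no_separated; apply: NNPP => no_net.
have grow (s : seq T) :
    {in s, forall x, A x} -> exists x, A x /\ all (fun y => ~~ close x y) s.
  move=> sA; apply: NNPP => no_far; apply: no_net; exists s; split=> // x Ax.
  apply: NNPP => no_close; apply: no_far; exists x; split=> //.
  by apply/allP => y ys; apply/negP => xy; apply: no_close; exists y.
have separated k : exists s : seq T, [/\ size s = k, {in s, forall x, A x} &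
    pairwise (fun x y => ~~ close y x) s].
  elim: k => [|k [s [sz sA sp]]]; first by exists [::].
  have [x [Ax far_x]] := grow s sA.
  exists (rcons s x); rewrite size_rcons sz pairwise_rcons far_x sp; split=> // y.
  by rewrite mem_rcons inE => /predU1P[->|/sA].
have [s [sz sA sp]] := separated m.
by move: (no_separated s sz sA); rewrite sp.
Qed.

Section ResidueClasses.
Variables (R : realType) (K : fieldType) (vK : K -> R).
Hypothesis hK : nonarch_abs vK.

Lemma residue_countable_of_nets (Q : nat -> K -> Prop) :
  (forall m, exists s : seq K, {in s, forall x, vK x <= 1} /\
     forall c, vK c <= 1 -> Q m c -> exists2 x, x \in s & vK (c - x) < 1) ->
  (forall c, vK c <= 1 -> exists m, Q m c) ->
  residue_countable vK.
Proof.
move=> nets covered.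
have [net net_spec] := choice (fun m (s : seq K) => {in s, forall x, vK x <= 1} /\
  forall c, vK c <= 1 -> Q m c -> exists2 x, x \in s & vK (c - x) < 1) nets.
pose g k := if @unpickle (nat * nat)%type k is Some (m, i) then nth 0 (net m) i else 0.
exists g; split=> [k|x x1].
  rewrite /g; case: unpickle => [[m i]|]; last by rewrite absv0.
  have [i_lt|i_ge] := ltnP i (size (net m)); first by apply: (net_spec m).1; rewrite mem_nth.
  by rewrite nth_default // absv0.
have [m Qx] := covered x x1; have [y ym xy] := (net_spec m).2 x x1 Qx.
by exists (pickle (m, index y (net m))); rewrite /g pickleK nth_index.
Qed.

End ResidueClasses.

Section Span.
Variables (K L : fieldType) (iota : {rmorphism K -> L}) (w : nat -> L).

Definition wspan m (l : L) := exists lam : nat -> K, l = \sum_(j < m) iota (lam j) * w j.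

Lemma wspan0 m : wspan m 0.
Proof. by exists (fun=> 0); rewrite big1 // => j _; rewrite rmorph0 mul0r. Qed.

Lemma wspan_widen m m' l : (m <= m')%N -> wspan m l -> wspan m' l.
Proof.
move=> le_mm' [lam ->]; exists (fun j => if (j < m)%N then lam j else 0).
rewrite (big_ord_widen m' (fun j => iota (lam j) * w j) le_mm') big_mkcond.
by apply: eq_bigr => j _; case: ifP; rewrite ?rmorph0 ?mul0r.
Qed.

Lemma wspanD m l l' : wspan m l -> wspan m l' -> wspan m (l + l').
Proof.
move=> [lam ->] [lam' ->]; exists (fun j => lam j + lam' j).
by rewrite -big_split; apply: eq_bigr => j _; rewrite rmorphD mulrDl.
Qed.

Lemma wspanZw c k : wspan k.+1 (iota c * w k).
Proof.
exists (fun j => if j == k then c else 0).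
rewrite big_ord_recr /= eqxx big1 ?add0r // => j _.
by rewrite ifN ?rmorph0 ?mul0r // neq_ltn ltn_ord.
Qed.

End Span.

Section ResidueTranscendental.
Variables (R : realType) (K L : fieldType) (vK : K -> R) (vL : L -> R).
Variable iota : {rmorphism K -> L}.
Hypotheses (hK : nonarch_abs vK) (hL : nonarch_abs vL).
Hypothesis hiota : forall x, vL (iota x) = vK x.
Variable t : L.
Hypothesis ht : residue_transcendental vK vL iota t.

Lemma absv_sub_transcendental c : vK c <= 1 -> vL (t - iota c) = 1.
Proof.
move=> c1; have := ht.2 ('X - c%:P) (int_poly_XsubC hK c1).
rewrite map_polyXsubC hornerXsubC; apply; exists 1%N.
by rewrite coefB coefX coefC subr0 (absv1 hK).
Qed.

(* Clearing denominators turns the sum into P(t) for an integral P whose value at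
   c i0 is a unit, so P has nonzero reduction. *)
Lemma absv_partial_fractions k (c mu : 'I_k -> K) i0 :
  (forall i, vK (c i) <= 1) -> (forall i j, i != j -> vK (c i - c j) = 1) ->
  (forall i, vK (mu i) <= 1) -> vK (mu i0) = 1 ->
  vL (\sum_i iota (mu i) / (t - iota (c i))) = 1.
Proof.
move=> c1 c_sep mu1 mui0.
have tc1 i : vL (t - iota (c i)) = 1 := absv_sub_transcendental (c1 i).
pose P : {poly K} := \sum_i mu i *: \prod_(j | j != i) ('X - (c j)%:P).
have P_int : int_poly vK P.
  apply: int_poly_sum => // i _; apply: int_polyZ => //.
  by apply: int_poly_prod => // j _; apply: int_poly_XsubC.
have Pt : (map_poly iota P).[t] =
    \prod_j (t - iota (c j)) * \sum_i iota (mu i) / (t - iota (c i)).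
  rewrite rmorph_sum horner_sum mulr_sumr; apply: eq_bigr => i _.
  rewrite /= map_polyZ rmorph_prod hornerZ horner_prod [in RHS](bigD1 i) //=.
  under eq_bigr => j _ do rewrite map_polyXsubC hornerXsubC.
  have tci : t - iota (c i) != 0 by rewrite -(absv_eq0 hL) tc1 oner_eq0.
  by field.
have Pci0 : P.[c i0] = mu i0 * \prod_(j | j != i0) (c i0 - c j).
  rewrite horner_sum (bigD1 i0) //= [X in _ + X]big1 ?addr0 => [|i ii0].
    by rewrite hornerZ horner_prod; under eq_bigr => j _ do rewrite hornerXsubC.
  by rewrite hornerZ horner_prod (bigD1 i0) 1?eq_sym //= hornerXsubC subrr mul0r mulr0.
have [i1 Pi1] : exists i, vK P`_i = 1.
  apply: (int_poly_unit_coef hK P_int (c1 i0)).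
  by rewrite Pci0 (absvM hK) mui0 mul1r (absv_prod1 hK) // => j; rewrite eq_sym => /c_sep.
have := ht.2 P P_int (ex_intro _ i1 Pi1).
by rewrite Pt (absvM hL) (absv_prod1 hL) ?mul1r.
Qed.

Variable w : nat -> L.

Definition approx_inv_sub m c :=
  exists2 l, wspan iota w m l & vL ((t - iota c)^-1 - l) < 1.

(* A linear relation among the m+1 coefficient vectors, normalized to have a unit
   coefficient, kills the approximations and leaves a partial fraction sum of
   absolute value < 1. *)
Lemma approx_inv_sub_not_separated m (s : seq K) : size s = m.+1 ->
  {in s, forall c, vK c <= 1 /\ approx_inv_sub m c} ->
  ~~ pairwise (fun c d => ~~ (vK (d - c) < 1)) s.
Proof.
move=> sz s_ok; apply/negP => /(pairwiseP 0) s_sep.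
pose c (i : 'I_m.+1) := nth 0 s i.
have c_ok i : vK (c i) <= 1 /\ approx_inv_sub m (c i).
  by apply: s_ok; rewrite mem_nth // sz.
have c_sep i j : i != j -> vK (c i - c j) = 1.
  move=> ij; apply: (absvB_eq1 hK); [exact: (c_ok i).1 | exact: (c_ok j).1 |].
  have [ilj|jli|/val_inj eq_ij] := ltngtP i j; last by rewrite eq_ij eqxx in ij.
    by rewrite (absv_distC hK); apply: s_sep; rewrite // inE sz.
  by apply: s_sep; rewrite // inE sz.
have approx_lam i : exists lam : nat -> K,
    vL ((t - iota (c i))^-1 - \sum_(j < m) iota (lam j) * w j) < 1.
  by have [_ [l [lam ->]]] := c_ok i; exists lam.
have [lam lam_spec] := fin_all_exists approx_lam.
pose A : 'M[K]_(m.+1, m) := \matrix_(i, j) lam i j.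
have A_not_free : ~~ row_free A.
  by apply: contraTN (rank_leq_col A) => /eqP ->; rewrite ltnn.
have [mu [i0 [mu_ker mu1 mui0]]] := normalized_left_kernel hK A_not_free.
have lam_ker (j : 'I_m) : \sum_i mu i * lam i j = 0.
  by rewrite -[RHS](mu_ker j); apply: eq_bigr => i _; rewrite mxE.
have span_killed : \sum_i iota (mu i) * \sum_(j < m) iota (lam i j) * w j = 0.
  under eq_bigr => i _ do rewrite mulr_sumr.
  rewrite exchange_big /= big1 // => j _.
  under eq_bigr => i _ do rewrite mulrA -rmorphM.
  by rewrite -mulr_suml -rmorph_sum lam_ker rmorph0 mul0r.
have : vL (\sum_i iota (mu i) / (t - iota (c i))) < 1.
  have -> : \sum_i iota (mu i) / (t - iota (c i)) = \sum_i iota (mu i) *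
      ((t - iota (c i))^-1 - \sum_(j < m) iota (lam i j) * w j).
    by under [RHS]eq_bigr => i _ do rewrite mulrBr; rewrite sumrB span_killed subr0.
  by apply: (absv_sum_lt hL) => // i _; rewrite (absvM_lt1 hL) ?hiota.
by rewrite (absv_partial_fractions (fun i => (c_ok i).1) c_sep mu1 mui0) ltxx.
Qed.

Lemma approx_inv_sub_residue_net m : exists s : seq K, {in s, forall x, vK x <= 1} /\
  forall c, vK c <= 1 -> approx_inv_sub m c -> exists2 x, x \in s & vK (c - x) < 1.
Proof.
have [s [s_ok s_net]] := greedy_net (A := fun c => vK c <= 1 /\ approx_inv_sub m c)
  (close := fun x y => vK (x - y) < 1) (@approx_inv_sub_not_separated m).
by exists s; split=> [x /s_ok[]|c c1 cm]; last exact: s_net.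
Qed.

End ResidueTranscendental.

Section TateAlgebra.
Variables (R : realType) (K : fieldType) (vK : K -> R) (p n : nat).
Hypothesis hK : nonarch_abs vK.
Local Notation exps := {ffun 'I_n -> rat}.

Definition monomial (nu mu : exps) : K := (mu == nu)%:R.

Definition tate_trunc (a : exps -> K) (S : seq exps) (mu : exps) : K :=
  if mu \in S then a mu else 0.

Lemma tate_elt0 : tate_elt p vK (fun _ : exps => 0).
Proof. by split=> // e e_gt0; exists [::] => nu _; rewrite (absv0 hK). Qed.

Lemma tate_elt_trunc a S : tate_elt p vK a -> tate_elt p vK (tate_trunc a S).
Proof.
move=> [a_supp a_small]; split=> [nu /(a_supp nu) anu|e e_gt0].
  by rewrite /tate_trunc anu if_same.
have [S0 small_off_S0] := a_small e e_gt0.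
by exists S0 => nu nuS0; rewrite /tate_trunc; case: ifP; rewrite ?(absv0 hK) ?small_off_S0.
Qed.

Lemma tate_elt_monomialZ c nu : exponent p nu ->
  tate_elt p vK (fun mu => c * monomial nu mu).
Proof.
move=> nu_exp; split=> [mu mu_exp|e e_gt0].
  rewrite /monomial; have [mu_nu|_] := eqVneq mu nu; last by rewrite mulr0.
  by rewrite mu_nu in mu_exp.
by exists [:: nu] => mu; rewrite inE /monomial => /negbTE ->; rewrite mulr0 (absv0 hK).
Qed.

Lemma tate_elt_monomial nu : exponent p nu -> tate_elt p vK (monomial nu).
Proof.
move=> /(tate_elt_monomialZ 1).
by have -> : (fun mu => 1 * monomial nu mu) = monomial nu
  by apply: functional_extensionality => mu; rewrite mul1r.
Qed.

Variables (L : fieldType) (vL : L -> R) (iota : {rmorphism K -> L}).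
Hypothesis hL : nonarch_abs vL.
Variable phi : (exps -> K) -> L.
Hypothesis phiD : forall a b, tate_elt p vK a -> tate_elt p vK b ->
  phi (fun nu => a nu + b nu) = phi a + phi b.
Hypothesis phiZ : forall (c : K) a, tate_elt p vK a ->
  phi (fun nu => c * a nu) = iota c * phi a.

Definition monomial_image (j : nat) : L :=
  if @unpickle exps j is Some nu then phi (monomial nu) else 0.

Lemma phi0 : phi (fun _ => 0) = 0.
Proof. by have := phiZ 0 tate_elt0; rewrite rmorph0 !mul0r. Qed.

Lemma phi_trunc_wspan a S : tate_elt p vK a ->
  exists m, wspan iota monomial_image m (phi (tate_trunc a S)).
Proof.
move=> ha; elim: S => [|nu S [m IH]].
  have -> : tate_trunc a [::] = (fun _ => 0) by apply: functional_extensionality.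
  by exists 0%N; rewrite phi0; apply: wspan0.
have [old|new] := boolP ((nu \in S) || (a nu == 0)).
  have -> : tate_trunc a (nu :: S) = tate_trunc a S.
    apply: functional_extensionality => mu; rewrite /tate_trunc in_cons.
    have [->|] //= := eqVneq mu nu.
    by case/orP: old => [->|/eqP->]; rewrite ?if_same.
  by exists m.
move: new; rewrite negb_or => /andP[nuS anu].
have nu_exp : exponent p nu by apply: NNPP => /ha.1 /eqP; rewrite (negbTE anu).
have -> : tate_trunc a (nu :: S) = (fun mu => tate_trunc a S mu + a nu * monomial nu mu).
  apply: functional_extensionality => mu; rewrite /tate_trunc /monomial in_cons.
  have [->|_] /= := eqVneq mu nu; first by rewrite (negbTE nuS) mulr1 add0r.
  by rewrite mulr0 addr0.
rewrite phiD ?phiZ;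
  [|exact: tate_elt_monomial|exact: tate_elt_trunc|exact: tate_elt_monomialZ].
exists (maxn m (pickle nu).+1); apply: wspanD; first exact: wspan_widen (leq_maxl _ _) IH.
apply: wspan_widen (leq_maxr _ _) _.
by have := wspanZw iota monomial_image (a nu) (pickle nu); rewrite /monomial_image pickleK.
Qed.

Hypothesis phi_cont : forall a, tate_elt p vK a -> forall e, 0 < e -> exists2 d, 0 < d &
  forall b, tate_elt p vK b -> (forall nu, vK (b nu - a nu) < d) -> vL (phi b - phi a) < e.
Hypothesis phi_surj : forall l : L, exists a, tate_elt p vK a /\ phi a = l.

(* Truncating a preimage of x to its finitely many coefficients of size >= d
   moves its image by less than 1. *)
Lemma near_wspan_monomial_images x :
  exists m, exists2 l, wspan iota monomial_image m l & vL (x - l) < 1.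
Proof.
have [a [ha <-]] := phi_surj x.
have [d d_gt0 phi_near] := phi_cont ha ltr01.
have [S small_off_S] := ha.2 d d_gt0.
have [m span] := phi_trunc_wspan S ha.
exists m, (phi (tate_trunc a S)) => //.
rewrite (absv_distC hL); apply: phi_near; first exact: tate_elt_trunc.
move=> nu; rewrite /tate_trunc; case: ifP => [_|nuS]; first by rewrite subrr (absv0 hK).
by rewrite sub0r (absvN hK) small_off_S ?nuS.
Qed.

End TateAlgebra.

Theorem corollary6p5 (R : realType) (K L : fieldType) (vK : K -> R) (vL : L -> R)
    (iota : {rmorphism K -> L}) (p : nat) :
  perfectoid p vK ->
  nonarch_field vL ->
  (forall x, vL (iota x) = vK x) ->
  residue_trdeg_pos vK vL iota ->
  ~ residue_countable vK ->
  forall n : nat, ~ exists phi : ({ffun 'I_n -> rat} -> K) -> L,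
      tate_cont_surj p vK vL iota phi.
Proof.
move=> [_ [hK _] _ _ _] [hL _] hiota [t ht] not_countable n
  [phi [[[phiD phiZ _] _ phi_cont] phi_surj]].
apply: not_countable.
apply: (residue_countable_of_nets hK (Q := approx_inv_sub vL iota t (monomial_image phi))).
  by move=> m; apply: approx_inv_sub_residue_net.
by move=> c _; apply: (near_wspan_monomial_images hK hL phiD phiZ phi_cont phi_surj).
Qed.
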